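(* Let $p$ be a prime and let $a,b$ be integers with $0<a,b<p$. If $\bigl(p-(a^{-1}b)_p\bigr)\bigl(p-(ab^{-1})_p\bigr)=2p+1$, then $S^G_{a,b}$ is generated by 5 invariants, i.e. $|\mathrm{inv}_{a,b}|=5$ (equivalently, $\operatorname{codim}\ker\varphi_{a,b}=3$).
   Context: Let $S=\mathbb{C}[x_1,x_2]$ with its standard grading, $\zeta=e^{2\pi i/p}$ and $G=\mathbb{Z}/p\mathbb{Z}=\langle\zeta\rangle$. For integers $a,b$, $G$ acts on $S$ by the $\mathbb{C}$-algebra automorphisms determined by $x_1\mapsto\zeta^a x_1$, $x_2\mapsto \zeta^b x_2$; $S^G_{a,b}$ denotes the ring of invariants, spanned by the invariant monomials $x_1^cx_2^d$, i.e. those with $ac+bd\equiv 0\pmod p$. $\mathrm{inv}_{a,b}$ denotes the minimal set of monomial generators of $S^G_{a,b}$ as a $\mathbb{C}$-algebra: the nonconstant invariant monomials that are not a product of two nonconstant invariant monomials. Writing $\mathrm{inv}_{a,b}=\{z_0,\dots,z_n\}$ in lexicographic order with $x_1>x_2$, let $R=\mathbb{C}[y_0,\dots,y_n]$ with $\deg y_i=\deg z_i$ and $\varphi_{a,b}:R\to S^G_{a,b}$ the $\mathbb{C}$-algebra map $y_i\mapsto z_i$. For an integer $c$, $c_p$ is the unique integer $0\le c_p<p$ congruent to $c$ mod $p$, and for $c$ not divisible by $p$, $c^{-1}$ is the unique integer $0<c^{-1}<p$ with $cc^{-1}\equiv1\pmod p$. *)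

From mathcomp Require Import all_boot.
Set Implicit Arguments. Unset Strict Implicit. Unset Printing Implicit Defensive.

(* Monomials x1^c x2^d are represented by their exponent pairs (c, d). *)

Definition resp (p c : nat) : nat := c %% p.

(* c^{-1}: the unique integer 0 < x < p with c * x = 1 mod p
   (for p prime and c not divisible by p; default 0 otherwise). *)
Definition modinv (p c : nat) : nat :=
  head 0 [seq x <- iota 1 p.-1 | (c * x) %% p == 1 %% p].

(* x1^c x2^d is invariant under x1 -> zeta^a x1, x2 -> zeta^b x2. *)
Definition invariant_mon (p a b : nat) (m : nat * nat) : Prop :=
  (a * m.1 + b * m.2) %% p = 0.

Definition nonconst (m : nat * nat) : Prop := m <> (0, 0).

(* m is a minimal generator of S^G_{a,b}: a nonconstant invariant monomial
   that is not a product of two nonconstant invariant monomials. *)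
Definition in_inv (p a b : nat) (m : nat * nat) : Prop :=
  nonconst m /\ invariant_mon p a b m /\
  ~ (exists m1 m2 : nat * nat,
        nonconst m1 /\ nonconst m2 /\ invariant_mon p a b m1 /\
        invariant_mon p a b m2 /\ m = (m1.1 + m2.1, m1.2 + m2.2)).

From Stdlib Require Import ZArith Lia.
From mathcomp Require Import all_boot zify.

Set Implicit Arguments.
Unset Strict Implicit.
Unset Printing Implicit Defensive.

(* Multiplying by a^-1 shows that x1^i x2^j is invariant iff i = u j (mod p),
   where u = p - (a^-1 b)_p.  Invariant exponents are closed under
   componentwise subtraction, so the indecomposable ones are exactly the
   componentwise-minimal nonzero ones.  With v = p - (a b^-1)_p and
   u v = 2p + 1, an invariant exponent (i, j) has integer coordinates
   T = (u j - i)/p and S = (v i - j)/p with (2i, 2j) = T (1, v) + S (u, 1);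
   the signs of T and S show that it dominates one of
   (p, 0), (u, 1), ((u+1)/2, (v+1)/2), (1, v), (0, p).  These five are
   invariant and pairwise incomparable, hence they are the minimal ones. *)

Definition mon_dvd (m m' : nat * nat) : bool := (m.1 <= m'.1) && (m.2 <= m'.2).

Definition minimal_mon (L : nat * nat -> Prop) (m : nat * nat) : Prop :=
  [/\ nonconst m, L m &
      forall m', nonconst m' -> L m' -> mon_dvd m' m -> m' = m].

Lemma mon_dvd_trans m1 m2 m3 : mon_dvd m1 m2 -> mon_dvd m2 m3 -> mon_dvd m1 m3.
Proof. by rewrite /mon_dvd => /andP[? ?] /andP[? ?]; apply/andP; split; lia. Qed.

Lemma mon_dvd_anti m m' : mon_dvd m m' -> mon_dvd m' m -> m = m'.
Proof. by case: m m' => [i j] [i' j'] /andP[/= ? ?] /andP[/= ? ?]; congr pair; lia. Qed.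

Lemma minimal_monP (L : nat * nat -> Prop) (s : seq (nat * nat)) :
  {in s, forall g, nonconst g /\ L g} ->
  {in s &, forall g g', mon_dvd g g' -> g = g'} ->
  (forall m, nonconst m -> L m -> exists2 g, g \in s & mon_dvd g m) ->
  forall m, minimal_mon L m <-> m \in s.
Proof.
move=> sL s_antichain s_dom m; split=> [[nc_m Lm min_m] | ms].
- have [g gs g_m] := s_dom m nc_m Lm; have [nc_g Lg] := sL g gs.
  by rewrite -(min_m g).
- have [nc_m Lm] := sL m ms; split=> // m' nc_m' Lm' m'_m.
  have [g gs g_m'] := s_dom m' nc_m' Lm'.
  have gm : g = m by apply: s_antichain => //; apply: mon_dvd_trans m'_m.
  by apply: mon_dvd_anti => //; rewrite -gm.
Qed.

Lemma invariant_mon_sub p a b m m' :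
  invariant_mon p a b m -> invariant_mon p a b m' -> mon_dvd m m' ->
  invariant_mon p a b (m'.1 - m.1, m'.2 - m.2).
Proof.
rewrite /invariant_mon => /eqP Lm Lm' /andP[le1 le2] /=; move: Lm'.
move: (m'.1 - m.1) (m'.2 - m.2) (subnK le1) (subnK le2) => d1 d2 <- <-.
by rewrite !mulnDr addnACA => /eqP; rewrite -/(dvdn _ _) dvdn_addl // => /eqP.
Qed.

Lemma in_invE p a b m : in_inv p a b m <-> minimal_mon (invariant_mon p a b) m.
Proof.
split=> [[nc_m [Lm irr]] | [nc_m Lm min_m]].
- split=> // m' nc_m' Lm' m'_m; have /andP[le1 le2] := m'_m.
  case: (eqVneq m' m) => // ne_m'm; case: irr.
  exists m', (m.1 - m'.1, m.2 - m'.2); split=> //; split.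
    case=> /eqP + /eqP; rewrite !subn_eq0 => ge1 ge2.
    by move/eqP: ne_m'm; apply; apply: mon_dvd_anti m'_m _; apply/andP.
  split=> //; split; first exact: invariant_mon_sub.
  by rewrite !subnKC //; apply: surjective_pairing.
- do 2!split=> //; case=> m1 [m2 [nc1 [nc2 [L1 [L2 Em]]]]].
  have m1m : m1 = m by apply: min_m; rewrite // Em /mon_dvd /= !leq_addr.
  apply: nc2; move: Em; rewrite m1m; case: m2 {L2}; case: m {min_m nc_m Lm m1m}.
  by move=> i j x y [Ei Ej]; congr pair; lia.
Qed.

Lemma modinv_spec p a : prime p -> 0 < a < p ->
  0 < modinv p a < p /\ a * modinv p a = 1 %[mod p].
Proof.
move=> pp /andP[a0 ap]; have p1 := prime_gt1 pp; have p0 := prime_gt0 pp.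
have [x x_range ax] : exists2 x, 0 < x < p & a * x = 1 %[mod p].
  have /eqP cop : coprime a p by rewrite coprime_sym prime_coprime // gtnNdvd.
  case: (egcdnP p a0); rewrite cop => km kn Ekm _.
  exists (km %% p); last by rewrite modnMmr mulnC Ekm modnMDl.
  rewrite ltn_mod p0 andbT lt0n; apply: contraTneq isT => x0.
  move: Ekm => /(congr1 (modn^~ p)).
  by rewrite mulnC -modnMmr x0 muln0 modnMDl mod0n modn_small.
rewrite /modinv; set l := [seq y <- _ | _].
have xl : x \in l by rewrite mem_filter ax eqxx mem_iota; lia.
have : head 0 l \in l by case: (l) xl => //= y l' _; rewrite mem_head.
by rewrite mem_filter mem_iota => /andP[/eqP ay y_range]; split; [lia|].
Qed.

Lemma invariant_monE p a b m : prime p -> 0 < a < p ->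
  invariant_mon p a b m <-> m.1 = (p - resp p (modinv p a * b)) * m.2 %[mod p].
Proof.
case: m => i j pp a_range; rewrite /invariant_mon /resp /=.
have [/andP[ai0 aip] a_ai] := modinv_spec pp a_range.
set ai := modinv p a in ai0 aip a_ai *; set c := (ai * b) %% p.
have cop : coprime p ai by rewrite prime_coprime // gtnNdvd.
have scale : ai * (a * i + b * j) = i + c * j %[mod p].
  rewrite mulnDr !mulnA -modnDm -modnMml [ai * a]mulnC a_ai modnMml mul1n.
  by rewrite -[in RHS]modnDm modnMml modnDm.
have cancel : (p - c) * j + c * j = 0 %[mod p].
  by rewrite -mulnDl subnK ?modnMr ?mod0n // ltnW // ltn_mod prime_gt0.
suff E : ((a * i + b * j) %% p == 0) = (i == (p - c) * j %[mod p]).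
  by split=> /eqP; [rewrite E | rewrite -E] => /eqP.
rewrite -[_ == 0]/(p %| _) -(Gauss_dvdr _ cop) /dvdn scale -(eqn_modDr (c * j)) cancel.
by rewrite mod0n.
Qed.

Lemma eqn_mod_exZ p x y :
  x = y %[mod p] -> exists T : Z, Z.of_nat y = (Z.of_nat x + Z.of_nat p * T)%Z.
Proof.
move=> exy; exists (Z.of_nat (y %/ p) - Z.of_nat (x %/ p))%Z.
have := divn_eq x p; have := divn_eq y p; rewrite exy; lia.
Qed.

Lemma factor_bounds p u v :
  1 < p -> u <= p -> v <= p -> u * v = (2 * p).+1 -> 3 <= u < p /\ 3 <= v < p.
Proof.
move=> p_gt1 u_le v_le uv.
have u_ge3 : 3 <= u.
  by case: (leqP 3 u) => // u_lt3; have := leq_mul (ltnSE u_lt3) v_le; lia.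
have v_ge3 : 3 <= v.
  by case: (leqP 3 v) => // v_lt3; have := leq_mul u_le (ltnSE v_lt3); lia.
have u_lt : u < p by case: (ltnP u p) => // p_le; have := leq_mul p_le v_ge3; lia.
have v_lt : v < p by case: (ltnP v p) => // p_le; have := leq_mul u_ge3 p_le; lia.
by rewrite u_ge3 u_lt v_ge3 v_lt.
Qed.

Definition hilbert_basis (p u v : nat) : seq (nat * nat) :=
  [:: (p, 0); (u, 1); (uphalf u, uphalf v); (1, v); (0, p)].

Lemma hilbert_basis_lattice p u v : 0 < p -> u * v = (2 * p).+1 ->
  {in hilbert_basis p u v, forall g, nonconst g /\ g.1 = u * g.2 %[mod p]}.
Proof.
move=> p_gt0 uv; have /andP[u_odd v_odd] : odd u && odd v by rewrite -oddM uv /= oddM.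
have mid : u * uphalf v = uphalf u + p.
  by have := odd_uphalfK u_odd; have := odd_uphalfK v_odd; nia.
move=> g /[!inE]; rewrite /nonconst.
case/orP=> [/eqP-> | ]; first by split; [case; lia | rewrite muln0 modnn mod0n].
case/orP=> [/eqP-> | ]; first by split; [case; lia | rewrite muln1].
case/orP=> [/eqP-> | ]; first by split; [case; lia | rewrite mid modnDr].
case/orP=> [/eqP-> | /eqP->].
  by split; [case; lia | rewrite uv -[in RHS]addn1 modnMDl].
by split; [case; lia | rewrite modnMl mod0n].
Qed.

Lemma hilbert_basis_dominates p u v m :
  u * v = (2 * p).+1 -> m.1 = u * m.2 %[mod p] -> nonconst m ->
  exists2 g, g \in hilbert_basis p u v & mon_dvd g m.
Proof.
case: m => i j /= uv /eqn_mod_exZ[T eT] nz.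
have {}nz : i + j != 0 by apply/eqP => ij0; apply: nz; congr pair; lia.
move def_S: (2 * Z.of_nat j - Z.of_nat v * T)%Z => S.
have eS : (Z.of_nat v * Z.of_nat i = Z.of_nat j + Z.of_nat p * S)%Z by nia.
have e2i : (2 * Z.of_nat i = T + Z.of_nat u * S)%Z by nia.
rewrite /mon_dvd /=.
case: (Z.lt_trichotomy T 0) => [T_lt0 | [T_eq0 | T_gt0]].
- by exists (p, 0); rewrite ?inE ?eqxx //=; nia.
- have j_gt0 : 0 < j.
    by rewrite lt0n; apply: contraNneq nz => j0; move: eT; rewrite j0; lia.
  by exists (u, 1); rewrite ?inE ?eqxx ?orbT //=; nia.
case: (Z.lt_trichotomy S 0) => [S_lt0 | [S_eq0 | S_gt0]].
- by exists (0, p); rewrite ?inE ?eqxx ?orbT //=; nia.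
- have i_gt0 : 0 < i.
    by rewrite lt0n; apply: contraNneq nz => i0; move: eS; rewrite i0; lia.
  by exists (1, v); rewrite ?inE ?eqxx ?orbT //=; nia.
- by exists (uphalf u, uphalf v); rewrite ?inE ?eqxx ?orbT //=; nia.
Qed.

Lemma hilbert_basis_antichain p u v : 3 <= u < p -> 3 <= v < p ->
  {in hilbert_basis p u v &, forall g g', mon_dvd g g' -> g = g'}.
Proof.
move=> u_range v_range.
have anti : allrel (fun g g' => mon_dvd g g' ==> (g == g'))
  (hilbert_basis p u v) (hilbert_basis p u v).
  by rewrite /hilbert_basis /allrel /= /mon_dvd /= !xpair_eqE; lia.
by move=> g g' gs g's /(implyP (allrelP anti g g' gs g's)) /eqP.
Qed.

Lemma hilbert_basis_uniq p u v : 3 <= u < p -> 3 <= v < p -> uniq (hilbert_basis p u v).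
Proof. by move=> u_range v_range; rewrite /= !inE !xpair_eqE; lia. Qed.

Theorem proposition1p3 (p a b : nat) :
  prime p -> 0 < a < p -> 0 < b < p ->
  (p - resp p (modinv p a * b)) * (p - resp p (a * modinv p b)) = 2 * p + 1 ->
  exists s : seq (nat * nat),
    uniq s /\ size s = 5 /\ (forall m, in_inv p a b m <-> m \in s).
Proof.
move=> pp a_range _; rewrite addn1.
set u := p - resp p _; set v := p - resp p _ => uv.
have [u_range v_range] : 3 <= u < p /\ 3 <= v < p.
  by apply: factor_bounds uv; rewrite ?prime_gt1 ?leq_subr.
exists (hilbert_basis p u v); split; first exact: hilbert_basis_uniq.
split=> // m; rewrite in_invE; apply: minimal_monP => [g gs | | m' nc_m' inv_m'].
- have [nc_g g_lattice] := hilbert_basis_lattice (prime_gt0 pp) uv gs.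
  by split; last exact/invariant_monE.
- exact: hilbert_basis_antichain.
- by apply: hilbert_basis_dominates uv _ nc_m'; apply/invariant_monE.
Qed.
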